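(* Consider the faulty-starter delivery problem described in the context, with finisher starting position $(x,y)$, $y\ge0$. The competitive ratio of algorithm $\mathcal{A}_0$ is $$\mathrm{CR}_{\mathcal{A}_0}=\frac{1+\sqrt{x^2+y^2}}{\max\left\{1,\sqrt{(x-1)^2+y^2}\right\}}.$$
   Context: Setting. In the plane let $S=(0,0)$ and $T=(1,0)$. A ''starter'' drone carrying a package starts at $S$ at time $0$ and moves at unit speed along $\overline{ST}$ towards $T$. At an unknown time $t\in[0,1]$ it fails and stays forever at $(t,0)$ with the package. A ''finisher'' drone starts at time $0$ at $P=(x,y)$ with $y\ge0$, moves at unit speed and can stop and turn instantaneously. The package can be handed over only when the drones are co-located; it is delivered at the first time the finisher, carrying the package, is at $T$. An online algorithm $\mathcal{A}$ specifies the finisher's trajectory using only $(x,y)$; $A(t)$ is its delivery time for fail time $t$. $\mathrm{Opt}(t)=\max\{1,\sqrt{(x-t)^2+y^2}+1-t\}$ is the optimal offline delivery time. $\mathrm{CR}_{\mathcal{A}}(t)=A(t)/\mathrm{Opt}(t)$ and $\mathrm{CR}_{\mathcal{A}}=\sup_{0\le t\le1}\mathrm{CR}_{\mathcal{A}}(t)$. Algorithm $\mathcal{A}_0$: the finisher goes straight to $S$, then moves along $\overline{ST}$ towards $T$ until it finds the package, then continues to $T$. *)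

From Stdlib Require Import Reals Lra.
Open Scope R_scope.

Definition dist2 (a b c d : R) : R := sqrt ((a - c)^2 + (b - d)^2).

(* S = (0,0), T = (1,0); finisher starts at P = (x,y), y >= 0;
   the starter fails at time t in [0,1] and the package stays at (t,0). *)

Definition Opt (x y t : R) : R := Rmax 1 (dist2 x y t 0 + 1 - t).

(* Algorithm A0: the finisher goes straight to S (distance |PS|, arrival at
   time |PS|), then moves along ST towards T at unit speed.  Along ST it is
   behind the starter (which moves at unit speed, started at the same time
   from S), so it reaches the package at (t,0) exactly when it has travelled
   t further along ST, i.e. at time |PS| + t; it then carries the package the
   remaining distance 1 - t to T. *)
Definition A0_pickup (x y t : R) : R := dist2 x y 0 0 + t.
Definition A0 (x y t : R) : R := A0_pickup x y t + (1 - t).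

Definition CR_A0_at (x y t : R) : R := A0 x y t / Opt x y t.

(* The set of values CR_A0(t), t in [0,1]; CR_A0 is its supremum. *)
Definition CR_A0_values (x y : R) : R -> Prop :=
  fun r => exists t, 0 <= t <= 1 /\ r = CR_A0_at x y t.

(* The delivery time of A0 does not depend on the fail time: the finisher
   always travels |PS| and then the whole segment ST, so A0(t) = 1 + |PS|.
   By the triangle inequality |PT| <= |P(t,0)| + (1 - t), hence Opt is
   smallest at t = 1, where the ratio therefore attains its supremum. *)

From Stdlib Require Import Reals Rgeom Lra.
Open Scope R_scope.

Lemma dist2_dist_euc (a b c d : R) : dist2 a b c d = dist_euc a b c d.
Proof. unfold dist2, dist_euc. now rewrite !Rsqr_pow2. Qed.

Lemma dist2_triangle (a b c d e f : R) :
  dist2 a b c d <= dist2 a b e f + dist2 e f c d.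
Proof. rewrite !dist2_dist_euc. apply triangle. Qed.

Lemma dist2_axis (t u : R) : t <= u -> dist2 t 0 u 0 = u - t.
Proof.
  intros htu. unfold dist2.
  replace ((t - u) ^ 2 + (0 - 0) ^ 2) with ((u - t) ^ 2) by ring.
  apply sqrt_pow2. lra.
Qed.

Lemma A0_const (x y t : R) : A0 x y t = 1 + dist2 x y 0 0.
Proof. unfold A0, A0_pickup. ring. Qed.

Lemma Opt_gt0 (x y t : R) : 0 < Opt x y t.
Proof. unfold Opt. pose proof (Rmax_l 1 (dist2 x y t 0 + 1 - t)). lra. Qed.

Lemma Opt_min_at_1 (x y t : R) : t <= 1 -> Opt x y 1 <= Opt x y t.
Proof.
  intros ht. unfold Opt. apply Rle_max_compat_l.
  pose proof (dist2_triangle x y 1 0 t 0). rewrite (dist2_axis t 1 ht) in *. lra.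
Qed.

Lemma CR_A0_at_max_at_1 (x y t : R) : t <= 1 -> CR_A0_at x y t <= CR_A0_at x y 1.
Proof.
  intros ht. unfold CR_A0_at, Rdiv. rewrite !A0_const.
  apply Rmult_le_compat_l.
  - pose proof (sqrt_pos ((x - 0) ^ 2 + (y - 0) ^ 2)). unfold dist2. lra.
  - apply Rinv_le_contravar; [apply Opt_gt0 | now apply Opt_min_at_1].
Qed.

Lemma CR_A0_at_1 (x y : R) :
  CR_A0_at x y 1 = (1 + sqrt (x ^ 2 + y ^ 2)) / Rmax 1 (sqrt ((x - 1) ^ 2 + y ^ 2)).
Proof.
  unfold CR_A0_at, Opt. rewrite A0_const. unfold dist2.
  replace ((x - 0) ^ 2) with (x ^ 2) by ring.
  replace ((y - 0) ^ 2) with (y ^ 2) by ring.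
  f_equal. f_equal. ring.
Qed.

Lemma is_lub_attained (E : R -> Prop) (m : R) :
  E m -> (forall r, E r -> r <= m) -> is_lub E m.
Proof. intros hm hub. split; [exact hub | intros b hb; exact (hb m hm)]. Qed.

Theorem theorem1 (x y : R) (hy : 0 <= y) :
  is_lub (CR_A0_values x y)
    ((1 + sqrt (x ^ 2 + y ^ 2)) / Rmax 1 (sqrt ((x - 1) ^ 2 + y ^ 2))).
Proof.
  rewrite <- CR_A0_at_1. apply is_lub_attained.
  - exists 1. split; [lra | reflexivity].
  - intros r [t [[_ ht] ->]]. now apply CR_A0_at_max_at_1.
Qed.
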